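(* Let $\{S_i\mid i\in I\}$ be a collection of semigroups and let $F=\prod^{*}\{S_i\mid i\in I\}$ be their semigroup free product. Then $F^1$ is finitely right equated if and only if each $S_i^1$ ($i\in I$) is finitely right equated.
   Context: $S^1$ denotes $S$ if $S$ is a monoid and otherwise $S$ with an identity adjoined. For a semigroup $S$ and $a\in S$, $\mathbf{r}_S(a)=\{(s,t)\in S\times S\mid as=at\}$; $S$ is finitely right equated if each $\mathbf{r}_S(a)$ is finitely generated as a right congruence. The semigroup free product of pairwise disjoint semigroups $S_i$ consists of sequences $s_1*\dots*s_n$ with $s_j\in\bigsqcup S_i$ and consecutive entries from different $S_i$, multiplied by concatenation, multiplying the two adjacent entries if they lie in the same $S_i$. *)

From Stdlib Require Import List ClassicalEpsilon.
Import ListNotations.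
Set Implicit Arguments.

Section RightEquated.
Variable T : Type.
Variable m : T -> T -> T.

Definition is_right_congruence (rho : T -> T -> Prop) : Prop :=
  (forall x, rho x x) /\
  (forall x y, rho x y -> rho y x) /\
  (forall x y z, rho x y -> rho y z -> rho x z) /\
  (forall x y u, rho x y -> rho (m x u) (m y u)).

Definition right_congruence_generated (X : list (T * T)) : T -> T -> Prop :=
  fun s t => forall rho, is_right_congruence rho ->
    (forall p, In p X -> rho (fst p) (snd p)) -> rho s t.

Definition r_ann (a : T) : T -> T -> Prop := fun s t => m a s = m a t.

Definition finitely_generated_right_congruence (rho : T -> T -> Prop) : Prop :=
  exists X : list (T * T), forall s t, rho s t <-> right_congruence_generated X s t.

Definition finitely_right_equated : Prop :=
  forall a, finitely_generated_right_congruence (r_ann a).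

Definition is_monoid : Prop := exists e, forall x, m e x = x /\ m x e = x.

Definition adjoin_one_op (x y : option T) : option T :=
  match x, y with
  | None, _ => y
  | _, None => x
  | Some a, Some b => Some (m a b)
  end.

End RightEquated.

(** "S^1 is finitely right equated", where S^1 = S if S is a monoid and
    S with an identity adjoined otherwise. *)
Definition one_finitely_right_equated (T : Type) (m : T -> T -> T) : Prop :=
  (is_monoid m -> finitely_right_equated m) /\
  (~ is_monoid m -> finitely_right_equated (adjoin_one_op m)).

Section FreeProduct.
Variable I : Type.
Variable S : I -> Type.
Variable op : forall i, S i -> S i -> S i.

Definition letter := {i : I & S i}.

Fixpoint alternating (w : list letter) : Prop :=
  match w with
  | nil => True
  | x :: w' => match w' with
               | nil => True
               | y :: _ => projT1 x <> projT1 y /\ alternating w'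
               end
  end.

Definition fp_word := { w : list letter | w <> nil /\ alternating w }.

(** concatenation, multiplying the two adjacent entries if they lie in the
    same S_i *)
Definition glue (w1 w2 : list letter) : list letter :=
  match rev w1, w2 with
  | x :: u, y :: v =>
      match excluded_middle_informative (projT1 x = projT1 y) with
      | left e => rev u ++ (existT S (projT1 y)
                    (op (eq_rect _ S (projT2 x) _ e) (projT2 y))) :: v
      | right _ => w1 ++ w2
      end
  | _, _ => w1 ++ w2
  end.

Lemma alt_app a x b :
  alternating (a ++ [x]) -> alternating (x :: b) -> alternating (a ++ x :: b).
Proof.
  induction a as [|z a IH]; simpl; auto.
  destruct a as [|w a]; simpl in *.
  - intros [H _] H2; split; auto.
  - intros [H H1] H2; split; auto. apply (IH H1 H2).
Qed.

Lemma alt_last_replace a x x' :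
  alternating (a ++ [x]) -> projT1 x = projT1 x' -> alternating (a ++ [x']).
Proof.
  induction a as [|z a IH]; simpl; auto.
  destruct a as [|w a]; simpl in *.
  - intros [H _] E; rewrite <- E; split; auto.
  - intros [H H1] E; split; auto. apply (IH H1 E).
Qed.

Lemma alt_head_replace y y' v :
  alternating (y :: v) -> projT1 y = projT1 y' -> alternating (y' :: v).
Proof.
  destruct v; simpl; auto. intros [H H1] E; rewrite <- E; split; auto.
Qed.

Lemma glue_ok w1 w2 :
  w1 <> nil /\ alternating w1 -> w2 <> nil /\ alternating w2 ->
  glue w1 w2 <> nil /\ alternating (glue w1 w2).
Proof.
  intros [N1 A1] [N2 A2]. unfold glue.
  assert (R : w1 = rev (rev w1)) by (symmetry; apply rev_involutive).
  destruct (rev w1) as [|x u] eqn:E1.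
  - simpl in R; subst; congruence.
  - destruct w2 as [|y v]; [congruence|].
    simpl in R.
    destruct (excluded_middle_informative (projT1 x = projT1 y)) as [e|ne].
    + split.
      * destruct (rev u); discriminate.
      * apply alt_app.
        -- apply alt_last_replace with x; [rewrite <- R; exact A1 | exact e].
        -- apply alt_head_replace with y; auto.
    + split.
      * destruct w1; discriminate.
      * rewrite R, <- app_assoc; simpl. apply alt_app.
        -- rewrite <- R; exact A1.
        -- simpl. split; auto.
Qed.

Definition fp_mul (p q : fp_word) : fp_word :=
  exist _ (glue (proj1_sig p) (proj1_sig q)) (glue_ok (proj2_sig p) (proj2_sig q)).
End FreeProduct.

(* Adjoining an identity to a monoid does not affect being finitely right equated,
   so both sides become statements about F and the S_i with an identity adjoined.
   If a word w of F ends in the letter x of S_i, then w s = w t in F^1 exactly when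
   x h(s) = x h(t) in S_i^1 and s, t agree after their leading S_i-letters h(s), h(t).
   So r(w) is r(x) on the S_i-heads times equality on the rest: generators of r(x)
   embed into F^1 as one-letter words, and generators of r(w) project to S_i^1 via
   their S_i-heads. *)

From Stdlib Require Import List ClassicalEpsilon ProofIrrelevance Eqdep.
Import ListNotations.
Set Implicit Arguments.

Definition map_pair (A B : Type) (h : A -> B) (p : A * A) : B * B :=
  (h (fst p), h (snd p)).

Section RightCongruence.
Variables (T : Type) (m : T -> T -> T).

Lemma right_congruence_generated_rc X :
  is_right_congruence m (right_congruence_generated m X).
Proof.
  repeat split.
  - intros x rho [R _] _; apply R.
  - intros x y H rho Hr HX; apply (proj1 (proj2 Hr)), H; auto.
  - intros x y z Hxy Hyz rho Hr HX.
    apply (proj1 (proj2 (proj2 Hr))) with y; [apply Hxy | apply Hyz]; auto.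
  - intros x y u H rho Hr HX; apply (proj2 (proj2 (proj2 Hr))), H; auto.
Qed.

Lemma right_congruence_generated_base X p :
  In p X -> right_congruence_generated m X (fst p) (snd p).
Proof. intros Hp rho _ HX; apply HX, Hp. Qed.

Lemma right_congruence_generated_incl X Y s t :
  incl X Y -> right_congruence_generated m X s t ->
  right_congruence_generated m Y s t.
Proof. intros HXY H rho Hr HY; apply H; auto. Qed.

Lemma is_right_congruence_ext (rho rho' : T -> T -> Prop) :
  is_right_congruence m rho -> (forall s t, rho s t <-> rho' s t) ->
  is_right_congruence m rho'.
Proof.
  intros [R [Sy [Tr M]]] E; repeat split; intros; rewrite <- E in *; eauto.
Qed.

Lemma finitely_generated_rc rho :
  finitely_generated_right_congruence m rho -> is_right_congruence m rho.
Proof.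
  intros [X HX]; apply is_right_congruence_ext with (right_congruence_generated m X).
  - apply right_congruence_generated_rc.
  - intros s t; symmetry; apply HX.
Qed.

Lemma right_congruence_generated_nil s t :
  right_congruence_generated m [] s t <-> s = t.
Proof.
  split.
  - intro H; apply H; [|intros p []].
    repeat split; intros; subst; reflexivity.
  - intros ->; exact (proj1 (right_congruence_generated_rc []) t).
Qed.

End RightCongruence.

Lemma r_ann_adjoin_one_None_fg T (m : T -> T -> T) :
  finitely_generated_right_congruence (adjoin_one_op m) (r_ann (adjoin_one_op m) None).
Proof. exists []; intros s t; rewrite right_congruence_generated_nil; reflexivity. Qed.

Section Homomorphism.
Variables (A B : Type) (mA : A -> A -> A) (mB : B -> B -> B) (h : A -> B).
Hypothesis h_mul : forall x y, h (mA x y) = mB (h x) (h y).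

Lemma right_congruence_comap rho :
  is_right_congruence mB rho -> is_right_congruence mA (fun x y => rho (h x) (h y)).
Proof. intros [R [Sy [Tr M]]]; repeat split; intros; rewrite ?h_mul; eauto. Qed.

Lemma right_congruence_generated_map X x y :
  right_congruence_generated mA X x y ->
  right_congruence_generated mB (map (map_pair h) X) (h x) (h y).
Proof.
  intro H; apply (H (fun x y => right_congruence_generated mB _ (h x) (h y))).
  - apply right_congruence_comap, right_congruence_generated_rc.
  - intros p Hp; apply (@right_congruence_generated_base _ _ _ (map_pair h p)), in_map, Hp.
Qed.

End Homomorphism.

Arguments right_congruence_comap {A B mA mB h} h_mul {rho}.
Arguments right_congruence_generated_map {A B mA mB h} h_mul {X x y}.

Section AdjoinOne.
Variables (T : Type) (m : T -> T -> T) (e : T).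
Hypothesis e_unit : forall x, m e x = x /\ m x e = x.

Definition collapse_one (s : option T) : T :=
  match s with None => e | Some x => x end.

Lemma collapse_one_mul x y :
  collapse_one (adjoin_one_op m x y) = m (collapse_one x) (collapse_one y).
Proof. destruct x, y; simpl; try reflexivity; symmetry; apply e_unit. Qed.

Lemma Some_mul x y : Some (m x y) = adjoin_one_op m (Some x) (Some y).
Proof. reflexivity. Qed.

Lemma r_ann_adjoin_one a s t :
  r_ann (adjoin_one_op m) (Some a) s t <-> r_ann m a (collapse_one s) (collapse_one t).
Proof.
  unfold r_ann; destruct s, t; simpl; rewrite ?(proj2 (e_unit a)); split; congruence.
Qed.

Lemma adjoin_one_finitely_right_equated :
  finitely_right_equated m -> finitely_right_equated (adjoin_one_op m).
Proof.
  intros H [a|]; [|apply r_ann_adjoin_one_None_fg].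
  destruct (H a) as [Y HY].
  exists ((None, Some e) :: map (map_pair Some) Y); intros s t; split.
  - intro Hst.
    destruct (right_congruence_generated_rc (adjoin_one_op m)
                ((None, Some e) :: map (map_pair Some) Y)) as [R [Sy [Tr _]]].
    assert (collapse_rel : forall u, right_congruence_generated (adjoin_one_op m)
              ((None, Some e) :: map (map_pair Some) Y) u (Some (collapse_one u))).
    { intros [u|]; [apply R|].
      apply (@right_congruence_generated_base _ _ _ (None, Some e)); left; reflexivity. }
    assert (Hc : right_congruence_generated m Y (collapse_one s) (collapse_one t))
      by apply HY, r_ann_adjoin_one, Hst.
    eapply Tr; [apply collapse_rel|]; eapply Tr; [|apply Sy, collapse_rel].
    apply right_congruence_generated_incl with (map (map_pair Some) Y).
    + intros p Hp; right; exact Hp.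
    + exact (right_congruence_generated_map Some_mul Hc).
  - intro Hst.
    assert (Hr : is_right_congruence (adjoin_one_op m) (r_ann (adjoin_one_op m) (Some a))).
    { apply is_right_congruence_ext
        with (fun u v => r_ann m a (collapse_one u) (collapse_one v)).
      - exact (right_congruence_comap collapse_one_mul (finitely_generated_rc (H a))).
      - intros; symmetry; apply r_ann_adjoin_one. }
    apply (Hst _ Hr); intros p [<-|Hp]; apply r_ann_adjoin_one; [reflexivity|].
    apply in_map_iff in Hp as [q [<- Hq]].
    apply HY, right_congruence_generated_base, Hq.
Qed.

Lemma finitely_right_equated_of_adjoin_one :
  finitely_right_equated (adjoin_one_op m) -> finitely_right_equated m.
Proof.
  intros H a; destruct (H (Some a)) as [X HX].
  exists (map (map_pair collapse_one) X); intros s t; split.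
  - intro Hst.
    apply (right_congruence_generated_map collapse_one_mul (x := Some s) (y := Some t)).
    apply HX, r_ann_adjoin_one, Hst.
  - intro Hst.
    assert (Hr : is_right_congruence m (r_ann m a)).
    { apply is_right_congruence_ext
        with (fun u v => r_ann (adjoin_one_op m) (Some a) (Some u) (Some v)).
      - exact (right_congruence_comap Some_mul (finitely_generated_rc (H (Some a)))).
      - intros; apply r_ann_adjoin_one. }
    apply (Hst _ Hr); intros p Hp; apply in_map_iff in Hp as [q [<- Hq]].
    apply r_ann_adjoin_one, HX, right_congruence_generated_base, Hq.
Qed.

End AdjoinOne.

Lemma one_finitely_right_equated_iff T (m : T -> T -> T) :
  one_finitely_right_equated m <-> finitely_right_equated (adjoin_one_op m).
Proof.
  split.
  - intros [Hmon Hnon]; destruct (classic (is_monoid m)) as [[e He]|N]; auto.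
    exact (@adjoin_one_finitely_right_equated T m e He (Hmon (ex_intro _ e He))).
  - intro H; split; [intros [e He]; exact (@finitely_right_equated_of_adjoin_one T m e He H)|auto].
Qed.

Unset Implicit Arguments.

Section FreeProduct.
Variables (I : Type) (S : I -> Type) (op : forall i, S i -> S i -> S i).

Notation word := (list (letter S)).

Lemma glue_nil_r w : glue op w [] = w.
Proof. unfold glue; destruct (rev w); apply app_nil_r. Qed.

Lemma glue_snoc_cons a x y v :
  glue op (a ++ [x]) (y :: v) =
  match excluded_middle_informative (projT1 x = projT1 y) with
  | left e => a ++ existT S (projT1 y) (op _ (eq_rect _ S (projT2 x) _ e) (projT2 y)) :: v
  | right _ => (a ++ [x]) ++ y :: v
  end.
Proof. unfold glue; rewrite rev_app_distr; simpl; rewrite rev_involutive; reflexivity. Qed.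

Lemma glue_snoc_merge a i x y v :
  glue op (a ++ [existT S i x]) (existT S i y :: v) = a ++ existT S i (op i x y) :: v.
Proof.
  rewrite glue_snoc_cons; simpl.
  destruct (excluded_middle_informative (i = i)) as [e|n]; [|congruence].
  rewrite (UIP_refl _ _ e); reflexivity.
Qed.

Lemma glue_snoc_sep a x y v :
  projT1 x <> projT1 y -> glue op (a ++ [x]) (y :: v) = a ++ x :: y :: v.
Proof.
  intro n; rewrite glue_snoc_cons.
  destruct (excluded_middle_informative _) as [e|_]; [congruence|].
  rewrite <- app_assoc; reflexivity.
Qed.

Lemma glue_single_merge i x y v :
  glue op [existT S i x] (existT S i y :: v) = existT S i (op i x y) :: v.
Proof. exact (glue_snoc_merge [] i x y v). Qed.

Lemma glue_single_sep x y v : projT1 x <> projT1 y -> glue op [x] (y :: v) = [x; y] ++ v.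
Proof. exact (glue_snoc_sep [] x y v). Qed.

Lemma glue_cons x u w : u <> [] -> glue op (x :: u) w = x :: glue op u w.
Proof.
  intro N; destruct (exists_last N) as [u' [z ->]].
  destruct w as [|y v]; [rewrite !glue_nil_r; reflexivity|].
  change (x :: u' ++ [z]) with ((x :: u') ++ [z]).
  rewrite !glue_snoc_cons; destruct (excluded_middle_informative _); reflexivity.
Qed.

Lemma glue_cons_head x u w :
  exists x' u', glue op (x :: u) w = x' :: u' /\ projT1 x' = projT1 x.
Proof.
  destruct u as [|y u]; [|rewrite glue_cons by discriminate; eauto].
  destruct w as [|y v]; [rewrite glue_nil_r; eauto|].
  change [x] with ([] ++ [x]); rewrite glue_snoc_cons.
  destruct (excluded_middle_informative _) as [e|n]; simpl; eauto.
Qed.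

Section Component.
Variable i : I.

Definition head_at (w : word) : option (S i) :=
  match w with
  | [] => None
  | y :: _ => match excluded_middle_informative (projT1 y = i) with
              | left e => Some (eq_rect _ S (projT2 y) _ e)
              | right _ => None
              end
  end.

Definition behead_at (w : word) : word :=
  match w with
  | [] => []
  | y :: w' => if excluded_middle_informative (projT1 y = i) then w' else w
  end.

Definition factor_word (u : option (S i)) : word :=
  match u with None => [] | Some y => [existT S i y] end.

Definition mul_adjoined (x : S i) (u : option (S i)) : S i :=
  match u with None => x | Some y => op i x y end.

Lemma head_at_same y w : head_at (existT S i y :: w) = Some y.
Proof.
  simpl; destruct (excluded_middle_informative (i = i)) as [e|n]; [|congruence].
  rewrite (UIP_refl _ _ e); reflexivity.
Qed.

Lemma behead_at_same y w : behead_at (existT S i y :: w) = w.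
Proof. simpl; destruct (excluded_middle_informative (i = i)); congruence. Qed.

Lemma head_at_other y w : projT1 y <> i -> head_at (y :: w) = None.
Proof. intro n; simpl; destruct (excluded_middle_informative _); [congruence|auto]. Qed.

Lemma behead_at_other y w : projT1 y <> i -> behead_at (y :: w) = y :: w.
Proof. intro n; simpl; destruct (excluded_middle_informative _); [congruence|auto]. Qed.

Lemma head_at_factor_word u : head_at (factor_word u) = u.
Proof. destruct u; [apply head_at_same|reflexivity]. Qed.

Lemma behead_at_factor_word u : behead_at (factor_word u) = [].
Proof. destruct u; [apply behead_at_same|reflexivity]. Qed.

Lemma alternating_behead_at w : alternating w -> alternating (behead_at w).
Proof.
  destruct w as [|y w]; simpl; auto.
  destruct (excluded_middle_informative _); auto.
  destruct w; simpl; tauto.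
Qed.

Lemma factor_word_glue_behead_at w :
  alternating w -> w = glue op (factor_word (head_at w)) (behead_at w).
Proof.
  destruct w as [|[j y] w]; [reflexivity|]; intro A.
  destruct (excluded_middle_informative (j = i)) as [->|n].
  - rewrite head_at_same, behead_at_same.
    destruct w as [|z v]; [rewrite glue_nil_r; reflexivity|].
    symmetry; apply glue_single_sep, A.
  - rewrite head_at_other, behead_at_other by auto; reflexivity.
Qed.

Lemma glue_behead_at_nil s w :
  behead_at s = [] ->
  head_at (glue op s w) = adjoin_one_op (op i) (head_at s) (head_at w) /\
  behead_at (glue op s w) = behead_at w.
Proof.
  destruct s as [|[j x] s]; [auto|].
  destruct (excluded_middle_informative (j = i)) as [->|n];
    [|rewrite behead_at_other by auto; discriminate].
  rewrite behead_at_same, head_at_same; intros ->.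
  destruct w as [|[k y] v]; [rewrite glue_nil_r, head_at_same, behead_at_same; auto|].
  destruct (excluded_middle_informative (k = i)) as [->|n].
  - rewrite glue_single_merge, !head_at_same, !behead_at_same; auto.
  - rewrite glue_single_sep by (simpl; congruence); simpl app.
    rewrite head_at_same, behead_at_same, head_at_other, behead_at_other by auto; auto.
Qed.

Lemma glue_behead_at_cons s w :
  behead_at s <> [] ->
  head_at (glue op s w) = head_at s /\ behead_at (glue op s w) = glue op (behead_at s) w.
Proof.
  destruct s as [|y s]; [intro N; now elim N|].
  destruct (excluded_middle_informative (projT1 y = i)) as [e|n].
  - destruct y as [j x]; simpl in e; subst j.
    rewrite behead_at_same; intro N.
    rewrite glue_cons, !head_at_same, behead_at_same by exact N; auto.
  - rewrite head_at_other, behead_at_other by auto; intros _.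
    destruct (glue_cons_head y s w) as [y' [u' [Eg E]]].
    rewrite Eg, head_at_other, behead_at_other by congruence; auto.
Qed.

Lemma glue_snoc_at a x w :
  glue op (a ++ [existT S i x]) w =
  a ++ existT S i (mul_adjoined x (head_at w)) :: behead_at w.
Proof.
  destruct w as [|[j y] v]; [rewrite glue_nil_r; reflexivity|].
  destruct (excluded_middle_informative (j = i)) as [->|n].
  - rewrite glue_snoc_merge, head_at_same, behead_at_same; reflexivity.
  - rewrite glue_snoc_sep, head_at_other, behead_at_other by (simpl; auto); reflexivity.
Qed.

End Component.

Notation F1 := (option (fp_word S)).
Notation F1mul := (adjoin_one_op (fp_mul op)).

Definition word_of (s : F1) : word := match s with None => [] | Some w => proj1_sig w end.

Lemma word_of_inj s t : word_of s = word_of t -> s = t.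
Proof.
  destruct s as [[u [N A]]|], t as [[v [N' A']]|]; simpl; intro E; subst; try congruence.
  do 2 f_equal; apply proof_irrelevance.
Qed.

Lemma word_of_mul s t : word_of (F1mul s t) = glue op (word_of s) (word_of t).
Proof. destruct s, t; simpl; rewrite ?glue_nil_r; reflexivity. Qed.

Lemma word_of_alternating s : alternating (word_of s).
Proof. destruct s as [[u [N A]]|]; simpl; auto. Qed.

Lemma word_of_surj w : alternating w -> exists s, word_of s = w.
Proof.
  destruct w as [|y w]; intro A; [exists None; reflexivity|].
  assert (H : y :: w <> [] /\ alternating (y :: w)) by (split; [discriminate | exact A]).
  exists (Some (exist (fun u => u <> [] /\ alternating u) _ H)); reflexivity.
Qed.

Lemma single_letter_word (y : letter S) : [y] <> [] /\ alternating [y].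
Proof. split; [discriminate | exact Logic.I]. Qed.

Definition single_word (y : letter S) : fp_word S := exist _ [y] (single_letter_word y).

Definition embed i (u : option (S i)) : F1 :=
  option_map (fun y => single_word (existT S i y)) u.

Lemma word_of_embed i u : word_of (embed i u) = factor_word i u.
Proof. destruct u; reflexivity. Qed.

Lemma embed_mul i u v :
  embed i (adjoin_one_op (op i) u v) = F1mul (embed i u) (embed i v).
Proof.
  apply word_of_inj; rewrite word_of_mul, !word_of_embed.
  destruct u, v; simpl; rewrite ?glue_nil_r, ?glue_single_merge; reflexivity.
Qed.

Lemma embed_head_at_mul i s s' :
  word_of s' = behead_at i (word_of s) -> s = F1mul (embed i (head_at i (word_of s))) s'.
Proof.
  intro H; apply word_of_inj; rewrite word_of_mul, word_of_embed, H.
  apply factor_word_glue_behead_at, word_of_alternating.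
Qed.

Lemma last_letter (w : fp_word S) : exists a i x, proj1_sig w = a ++ [existT S i x].
Proof.
  destruct w as [u [N A]]; simpl.
  destruct (exists_last N) as [a [[i x] ->]]; eauto.
Qed.

Definition head_rel i (rho : option (S i) -> option (S i) -> Prop) (s t : F1) : Prop :=
  rho (head_at i (word_of s)) (head_at i (word_of t)) /\
  behead_at i (word_of s) = behead_at i (word_of t).

Lemma head_rel_embed i rho u v : head_rel i rho (embed i u) (embed i v) <-> rho u v.
Proof.
  unfold head_rel; rewrite !word_of_embed, !head_at_factor_word, !behead_at_factor_word.
  tauto.
Qed.

Lemma head_rel_rc i rho :
  is_right_congruence (adjoin_one_op (op i)) rho -> is_right_congruence F1mul (head_rel i rho).
Proof.
  intros [R [Sy [Tr M]]]; unfold head_rel; split; [|split; [|split]].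
  - intro s; split; [apply R | reflexivity].
  - intros s t [Hh Ht]; split; auto.
  - intros s t v [Hh Ht] [Hh' Ht']; split; [eauto | congruence].
  - intros s t u [Hh Ht]; rewrite !word_of_mul.
    destruct (classic (behead_at i (word_of s) = [])) as [E|E].
    + assert (E' : behead_at i (word_of t) = []) by congruence.
      destruct (glue_behead_at_nil i _ (word_of u) E) as [-> ->].
      destruct (glue_behead_at_nil i _ (word_of u) E') as [-> ->].
      split; [apply M, Hh | reflexivity].
    + assert (E' : behead_at i (word_of t) <> []) by congruence.
      destruct (glue_behead_at_cons i _ (word_of u) E) as [-> ->].
      destruct (glue_behead_at_cons i _ (word_of u) E') as [-> ->].
      split; [exact Hh | congruence].
Qed.

Lemma r_ann_last_letter i a x (w : fp_word S) :
  proj1_sig w = a ++ [existT S i x] ->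
  forall s t, r_ann F1mul (Some w) s t <-> head_rel i (r_ann (adjoin_one_op (op i)) (Some x)) s t.
Proof.
  intros Hw s t; unfold r_ann, head_rel.
  assert (Hx : forall u, adjoin_one_op (op i) (Some x) u = Some (mul_adjoined i x u))
    by (destruct u; reflexivity).
  rewrite !Hx; split.
  - intro E; apply (f_equal word_of) in E; rewrite !word_of_mul in E; simpl in E.
    rewrite Hw, !glue_snoc_at in E; apply app_inv_head in E.
    injection E as Ehead Etail; apply inj_pair2 in Ehead; split; congruence.
  - intros [Ehead Etail]; apply word_of_inj; rewrite !word_of_mul; simpl.
    rewrite Hw, !glue_snoc_at; injection Ehead as ->; rewrite Etail; reflexivity.
Qed.

Theorem fp_finitely_right_equated :
  (forall i, finitely_right_equated (adjoin_one_op (op i))) -> finitely_right_equated F1mul.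
Proof.
  intros H [w|]; [|apply r_ann_adjoin_one_None_fg].
  destruct (last_letter w) as [a [i [x Hw]]].
  destruct (H i (Some x)) as [X HX].
  exists (map (map_pair (embed i)) X); intros s t.
  rewrite (r_ann_last_letter i a x w Hw); split.
  - intros [Hhead Htail].
    destruct (word_of_surj _ (alternating_behead_at i _ (word_of_alternating s))) as [s' Hs'].
    rewrite (embed_head_at_mul i s s' Hs'), (embed_head_at_mul i t s' ltac:(congruence)).
    apply right_congruence_generated_rc.
    exact (right_congruence_generated_map (embed_mul i) (proj1 (HX _ _) Hhead)).
  - intro Hst; apply (Hst (head_rel i (r_ann (adjoin_one_op (op i)) (Some x)))).
    + exact (head_rel_rc i _ (finitely_generated_rc (H i (Some x)))).
    + intros p Hp; apply in_map_iff in Hp as [q [<- Hq]].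
      apply head_rel_embed, HX, right_congruence_generated_base, Hq.
Qed.

Theorem factor_finitely_right_equated :
  finitely_right_equated F1mul -> forall i, finitely_right_equated (adjoin_one_op (op i)).
Proof.
  intros H i [x|]; [|apply r_ann_adjoin_one_None_fg].
  pose proof (r_ann_last_letter i [] x (single_word (existT S i x)) eq_refl) as Hw.
  destruct (H (embed i (Some x))) as [Y HY].
  exists (map (map_pair (fun s => head_at i (word_of s))) Y); intros u v; split.
  - intros Huv rho Hr HX.
    assert (G : right_congruence_generated F1mul Y (embed i u) (embed i v))
      by apply HY, Hw, head_rel_embed, Huv.
    apply (head_rel_embed i rho), (G _ (head_rel_rc i rho Hr)).
    intros p Hp; split.
    + exact (HX (map_pair (fun s => head_at i (word_of s)) p) (in_map _ _ _ Hp)).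
    + apply Hw, HY, right_congruence_generated_base, Hp.
  - intro Huv.
    assert (Hr : is_right_congruence (adjoin_one_op (op i))
                   (r_ann (adjoin_one_op (op i)) (Some x))).
    { apply is_right_congruence_ext
        with (fun u v => r_ann F1mul (embed i (Some x)) (embed i u) (embed i v)).
      - exact (right_congruence_comap (embed_mul i) (finitely_generated_rc (H _))).
      - intros; rewrite Hw; apply head_rel_embed. }
    apply (Huv _ Hr); intros p Hp; apply in_map_iff in Hp as [q [<- Hq]].
    apply Hw, HY, right_congruence_generated_base, Hq.
Qed.

End FreeProduct.

Theorem mainTheorem9 (I : Type) (S : I -> Type) (op : forall i, S i -> S i -> S i)
  (assoc : forall i (x y z : S i), op i x (op i y z) = op i (op i x y) z) :
  one_finitely_right_equated (fp_mul op) <->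
  (forall i, one_finitely_right_equated (op i)).
Proof.
  setoid_rewrite one_finitely_right_equated_iff; split.
  - exact (factor_finitely_right_equated I S op).
  - exact (fp_finitely_right_equated I S op).
Qed.
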